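(* Let $C,A_1,\dots,A_m\in\mathbb{S}^n$, $b\in\mathbb{R}^m$, and write $\mathcal{L}(y)=C-\sum_{i=1}^my_iA_i$. Let $(U,V)\in\mathbb{R}^{n\times n}$ be invertible with $U\in\mathbb{R}^{n\times d}$, $V\in\mathbb{R}^{n\times(n-d)}$, $U^TV=0$. Consider the problem (R/D-SDP): minimize $C\cdot X$ subject to $A_i\cdot X=b_i$ ($i=1,\dots,m$) and $X=(U,V)\begin{pmatrix}W&Z\\Z^T&R\end{pmatrix}(U,V)^T$ with $W\in\mathbb{S}^d_+$, $R\in\mathbb{S}^{n-d}$, $Z\in\mathbb{R}^{d\times(n-d)}$. Assume (R/D-SDP) has an optimal solution and that $$\{y\in\mathbb{R}^m: V^T\mathcal{L}(y)V=0\}=\{y\in\mathbb{R}^m: V^T\mathcal{L}(y)V=0,\ V^T\mathcal{L}(y)U=0\}.$$ Then (R/D-SDP) has an optimal solution with $Z=0$.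
   Context: $\mathbb{S}^n$ is the space of real symmetric $n\times n$ matrices with trace inner product $A\cdot B=\operatorname{trace}(AB)$; $\mathbb{S}^d_+$ is the positive semidefinite cone. *)

From HB Require Import structures.
From mathcomp Require Import all_boot all_order all_algebra.
From mathcomp Require Import reals.
Set Implicit Arguments. Unset Strict Implicit. Unset Printing Implicit Defensive.
Import Order.TTheory GRing.Theory Num.Theory.
Local Open Scope ring_scope.

Section Defs.
Variable R : realType.

Definition symmx (n : nat) (A : 'M[R]_n) : Prop := A^T = A.

Definition psdmx (n : nat) (A : 'M[R]_n) : Prop :=
  symmx A /\ forall x : 'cV[R]_n, 0 <= (x^T *m A *m x) 0 0.

Definition mxdot (n : nat) (A B : 'M[R]_n) : R := \tr (A *m B).

Definition Lmap (n m : nat) (C : 'M[R]_n) (A : 'I_m -> 'M[R]_n) (y : 'I_m -> R)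
  : 'M[R]_n := C - \sum_(i < m) y i *: A i.

(* X = (U,V) [W Z; Z^T Rm] (U,V)^T ; here n = d + k, k = n - d *)
Definition facemx (d k : nat) (U : 'M[R]_(d + k, d)) (V : 'M[R]_(d + k, k))
  (W : 'M[R]_d) (Z : 'M[R]_(d, k)) (Rm : 'M[R]_k) : 'M[R]_(d + k) :=
  row_mx U V *m block_mx W Z Z^T Rm *m (row_mx U V)^T.

Definition RD_feasible (d k m : nat) (A : 'I_m -> 'M[R]_(d + k)) (b : 'I_m -> R)
  (U : 'M[R]_(d + k, d)) (V : 'M[R]_(d + k, k))
  (W : 'M[R]_d) (Z : 'M[R]_(d, k)) (Rm : 'M[R]_k) : Prop :=
  psdmx W /\ symmx Rm /\
  forall i : 'I_m, mxdot (A i) (facemx U V W Z Rm) = b i.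

Definition RD_optimal (d k m : nat) (C : 'M[R]_(d + k))
  (A : 'I_m -> 'M[R]_(d + k)) (b : 'I_m -> R)
  (U : 'M[R]_(d + k, d)) (V : 'M[R]_(d + k, k))
  (W : 'M[R]_d) (Z : 'M[R]_(d, k)) (Rm : 'M[R]_k) : Prop :=
  RD_feasible A b U V W Z Rm /\
  forall (W' : 'M[R]_d) (Z' : 'M[R]_(d, k)) (Rm' : 'M[R]_k),
    RD_feasible A b U V W' Z' Rm' ->
    mxdot C (facemx U V W Z Rm) <= mxdot C (facemx U V W' Z' Rm').

End Defs.

(* The R-block of the face is constrained only by symmetry, so optimality forces
   V^T C V to be orthogonal to every symmetric T with tr (V^T A_i V T) = 0 for
   all i; hence V^T C V lies in the span of the V^T A_i V, i.e. some y has
   V^T L(y) V = 0.  The hypothesis then gives V^T L(y) U = 0, so on the feasible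
   set the objective is tr (U^T L(y) U W) + b.y and depends on W alone.  Applied
   to y + z, the hypothesis also shows that every linear relation among the
   V^T A_i V holds among the V^T A_i U; by linear duality the contribution of Z
   to the constraints can then be absorbed into a new R-block, which yields a
   feasible point with Z = 0, the same W, and therefore the same optimal value. *)

From HB Require Import structures.
From mathcomp Require Import all_boot all_order all_algebra.
From mathcomp Require Import reals lra ring.
Set Implicit Arguments. Unset Strict Implicit.
Import Order.TTheory GRing.Theory Num.Theory.
Local Open Scope ring_scope.

Section TraceDuality.
Variable R : realType.

Lemma rowspace_of_ker_sub p q (G : 'M[R]_(p, q)) (c : 'rV_q) :
  (forall x : 'cV_q, G *m x = 0 -> c *m x = 0) -> exists y : 'rV_p, c = y *m G.
Proof.
move=> kerGc; exists (c *m pinvmx G); rewrite mulmxKpV // submxE.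
apply/eqP/matrixP => i j; rewrite [RHS]mxE.
have := kerGc (cokermx G *m delta_mx j 0).
rewrite mulmxA mulmx_coker mul0mx => /(_ erefl).
by rewrite mulmxA -colE => /matrixP/(_ i 0); rewrite !mxE.
Qed.

Lemma mxtrace_mul_trmx_sym n (B S : 'M[R]_n) :
  B^T = B -> \tr (B *m S) = \tr (B *m S^T).
Proof. by move=> symB; rewrite -mxtrace_tr trmx_mul symB mxtrace_mulC. Qed.

Lemma mxtrace_mul_trmxE p q (X S : 'M[R]_(p, q)) :
  \tr (X *m S^T) = (mxvec X *m (mxvec S)^T) 0 0.
Proof.
rewrite /mxtrace mxE.
under eq_bigr do rewrite mxE.
under [RHS]eq_bigr do rewrite mxE.
under eq_bigr do under eq_bigr do rewrite mxE.
rewrite pair_big /= (reindex (fun ij : 'I_p * 'I_q => mxvec_index ij.1 ij.2)) /=.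
  by apply: eq_bigr => -[i j] _ /=; rewrite !mxvecE.
case: (curry_mxvec_bij p q) => g gK Kg; exists g => [[i j]|l] _ /=.
  exact: (gK (i, j)).
by case: (g l) (Kg l isT).
Qed.

Variables (p q m : nat) (B : 'I_m -> 'M[R]_(p, q)).

Definition mxvec_rows : 'M[R]_(m, p * q) := \matrix_(i, j) mxvec (B i) 0 j.

Lemma mxvec_rows_mulE (x : 'cV_(p * q)) i :
  (mxvec_rows *m x) i 0 = (mxvec (B i) *m x) 0 0.
Proof. by rewrite !mxE; apply: eq_bigr => j _; rewrite mxE. Qed.

Lemma mul_mxvec_rows (z : 'rV_m) :
  z *m mxvec_rows = mxvec (\sum_i z 0 i *: B i).
Proof.
apply/rowP => j; rewrite linear_sum summxE !mxE.
by apply: eq_bigr => i _; rewrite linearZ !mxE.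
Qed.

Lemma span_of_trace_annihilator (X : 'M[R]_(p, q)) :
  (forall S, (forall i, \tr (B i *m S^T) = 0) -> \tr (X *m S^T) = 0) ->
  exists y : 'I_m -> R, X = \sum_i y i *: B i.
Proof.
move=> annX.
have /rowspace_of_ker_sub [y Xy] :
    forall x : 'cV_(p * q), mxvec_rows *m x = 0 -> mxvec X *m x = 0.
  move=> x Gx; apply/rowP => j; rewrite ord1 [RHS]mxE.
  have := annX (vec_mx x^T); rewrite mxtrace_mul_trmxE vec_mxK trmxK => -> // i.
  by rewrite mxtrace_mul_trmxE vec_mxK trmxK -mxvec_rows_mulE Gx mxE.
by exists (y 0); apply: (can_inj mxvecK); rewrite Xy mul_mxvec_rows.
Qed.

Lemma trace_system_solvable (c : 'I_m -> R) :
  (forall z : 'I_m -> R, \sum_i z i *: B i = 0 -> \sum_i z i * c i = 0) ->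
  exists S : 'M[R]_(p, q), forall i, \tr (B i *m S^T) = c i.
Proof.
move=> relc.
have /rowspace_of_ker_sub [y cy] :
    forall x : 'cV_m, mxvec_rows^T *m x = 0 -> \row_i c i *m x = 0.
  move=> x /(congr1 trmx); rewrite trmx_mul trmxK mul_mxvec_rows trmx0.
  move=> /(congr1 vec_mx); rewrite mxvecK linear0 => /relc zc.
  apply/rowP => j; rewrite ord1 !mxE -[RHS]zc.
  by apply: eq_bigr => i _; rewrite !mxE mulrC.
exists (vec_mx y) => i; rewrite mxtrace_mul_trmxE vec_mxK.
have /rowP/(_ i) := cy; rewrite mxE => ->.
by rewrite -mxvec_rows_mulE -[mxvec_rows in LHS]trmxK -trmx_mul mxE.
Qed.

End TraceDuality.

Section Lmap.
Variables (R : realType) (n m : nat) (C : 'M[R]_n) (A : 'I_m -> 'M[R]_n).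

Lemma trmx_conj_sym p q (M : 'M[R]_n) (X : 'M[R]_(n, p)) (Y : 'M[R]_(n, q)) :
  symmx M -> (X^T *m M *m Y)^T = Y^T *m M *m X.
Proof. by move=> symM; rewrite !trmx_mul trmxK symM mulmxA. Qed.

Lemma mulmx_Lmap p q (X : 'M[R]_(p, n)) (Y : 'M[R]_(n, q)) y :
  X *m Lmap C A y *m Y = X *m C *m Y - \sum_i y i *: (X *m A i *m Y).
Proof.
rewrite /Lmap mulmxBr mulmxBl mulmx_sumr mulmx_suml; congr (_ - _).
by apply: eq_bigr => i _; rewrite -scalemxAr -scalemxAl.
Qed.

Lemma Lmap_add y z :
  Lmap C A (fun i => y i + z i) = Lmap C A y - \sum_i z i *: A i.
Proof.
by rewrite /Lmap (eq_bigr _ (fun i _ => scalerDl _ _ _)) big_split opprD addrA.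
Qed.

Lemma mxdot_Lmap y X :
  mxdot C X = mxdot (Lmap C A y) X + \sum_i y i * mxdot (A i) X.
Proof.
rewrite /mxdot /Lmap mulmxBl (raddfB (@mxtrace R n)) mulmx_suml.
rewrite (raddf_sum (@mxtrace R n)) /=.
under eq_bigr do rewrite -scalemxAl mxtraceZ.
by rewrite subrK.
Qed.

Lemma symmx_Lmap y : symmx C -> (forall i, symmx (A i)) -> symmx (Lmap C A y).
Proof.
move=> symC symA; rewrite /symmx /Lmap linearB /= linear_sum /= symC.
by congr (_ - _); apply: eq_bigr => i _; rewrite linearZ /= symA.
Qed.

End Lmap.

Section FacialReduction.
Variables (R : realType) (d k m : nat).
Variables (C : 'M[R]_(d + k)) (A : 'I_m -> 'M[R]_(d + k)) (b : 'I_m -> R).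
Variables (U : 'M[R]_(d + k, d)) (V : 'M[R]_(d + k, k)).

Lemma mxdot_facemx (M : 'M[R]_(d + k)) W Z Rm :
  mxdot M (facemx U V W Z Rm) =
  \tr (U^T *m M *m U *m W) + \tr (U^T *m M *m V *m Z^T)
  + (\tr (V^T *m M *m U *m Z) + \tr (V^T *m M *m V *m Rm)).
Proof.
rewrite /mxdot /facemx !mulmxA mxtrace_mulC !mulmxA.
have -> : (row_mx U V)^T *m M *m row_mx U V = block_mx (U^T *m M *m U)
    (U^T *m M *m V) (V^T *m M *m U) (V^T *m M *m V).
  by rewrite tr_row_mx !mul_col_mx !mul_mx_row -block_mxEv.
by rewrite mulmx_block mxtrace_block !mxtraceD.
Qed.

Lemma mxdot_facemx_addR (M : 'M[R]_(d + k)) W Z Rm s T :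
  mxdot M (facemx U V W Z (Rm + s *: T)) =
  mxdot M (facemx U V W Z Rm) + s * \tr (V^T *m M *m V *m T).
Proof. by rewrite !mxdot_facemx mulmxDr mxtraceD -scalemxAr mxtraceZ; ring. Qed.

Hypotheses (symC : symmx C) (symA : forall i, symmx (A i)).

Lemma RD_optimal_face_dual W Z Rm :
  RD_optimal C A b U V W Z Rm -> exists y, V^T *m Lmap C A y *m V = 0.
Proof.
case=> -[psdW [symRm bX]] optX.
pose B i := V^T *m A i *m V.
have /span_of_trace_annihilator [y VCVy] : forall S,
    (forall i, \tr (B i *m S^T) = 0) -> \tr (V^T *m C *m V *m S^T) = 0.
  move=> S BS; pose T := S + S^T.
  have BT i : \tr (B i *m T) = 0.
    rewrite mulmxDr mxtraceD BS addr0.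
    by rewrite (mxtrace_mul_trmx_sym S (trmx_conj_sym V V (symA i))) BS.
  have feas s : RD_feasible A b U V W Z (Rm + s *: T).
    split=> //; split=> [|i]; last by rewrite mxdot_facemx_addR BT mulr0 addr0.
    by rewrite /symmx linearD /= linearZ /= symRm /T linearD /= trmxK (addrC S^T).
  have VCVT : \tr (V^T *m C *m V *m T) = 0.
    have := optX _ _ _ (feas 1); have := optX _ _ _ (feas (-1)).
    have := mxdot_facemx_addR C W Z Rm 1 T.
    have := mxdot_facemx_addR C W Z Rm (-1) T.
    lra.
  move: VCVT; rewrite mulmxDr mxtraceD.
  by rewrite (mxtrace_mul_trmx_sym S (trmx_conj_sym V V symC)); lra.
by exists y; rewrite mulmx_Lmap VCVy subrr.
Qed.

Lemma RD_objective_on_face y W Z Rm :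
  V^T *m Lmap C A y *m V = 0 -> V^T *m Lmap C A y *m U = 0 ->
  RD_feasible A b U V W Z Rm ->
  mxdot C (facemx U V W Z Rm) =
  \tr (U^T *m Lmap C A y *m U *m W) + \sum_i y i * b i.
Proof.
move=> VLV VLU [_ [_ bX]].
have ULV : U^T *m Lmap C A y *m V = 0.
  by rewrite -(trmx_conj_sym _ _ (symmx_Lmap y symC symA)) VLU trmx0.
rewrite (mxdot_Lmap C A y) mxdot_facemx ULV VLU VLV !mul0mx !mxtrace0 !addr0.
by congr (_ + _); apply: eq_bigr => i _; rewrite bX.
Qed.

Lemma RD_feasible_drop_Z W Z Rm :
  (forall z : 'I_m -> R, \sum_i z i *: (V^T *m A i *m V) = 0 ->
     \sum_i z i *: (V^T *m A i *m U) = 0) ->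
  RD_feasible A b U V W Z Rm -> exists Rm', RD_feasible A b U V W 0 Rm'.
Proof.
move=> relVU [psdW [symRm bX]].
pose B i := V^T *m A i *m V.
pose c i := \tr (V^T *m A i *m U *m Z) + \tr (U^T *m A i *m V *m Z^T)
  + \tr (B i *m Rm).
have /trace_system_solvable [S BS] :
    forall z, \sum_i z i *: B i = 0 -> \sum_i z i * c i = 0.
  move=> z Bz.
  have sum_tr p q (X : 'I_m -> 'M[R]_(p, q)) (Y : 'M[R]_(q, p)) :
      \sum_i z i * \tr (X i *m Y) = \tr ((\sum_i z i *: X i) *m Y).
    rewrite mulmx_suml raddf_sum /=; apply: eq_bigr => i _.
    by rewrite -scalemxAl mxtraceZ.
  have zVU := relVU z Bz.
  have zUV : \sum_i z i *: (U^T *m A i *m V) = 0.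
    apply: trmx_inj; rewrite trmx0 -zVU linear_sum.
    by apply: eq_bigr => i _; rewrite linearZ /= trmx_conj_sym.
  rewrite /c; under eq_bigr do rewrite !mulrDr.
  by rewrite !big_split /= !sum_tr zVU zUV Bz !mul0mx !mxtrace0 !addr0.
exists (2^-1 *: (S + S^T)); split=> //; split=> [|i].
  by rewrite /symmx linearZ /= linearD /= trmxK addrC.
have BS' : \tr (B i *m (2^-1 *: (S + S^T))) = c i.
  rewrite -scalemxAr mxtraceZ mulmxDr mxtraceD.
  by rewrite (mxtrace_mul_trmx_sym S (trmx_conj_sym V V (symA i))) BS; lra.
rewrite mxdot_facemx trmx0 !mulmx0 !mxtrace0 add0r BS' -(bX i) mxdot_facemx /c.
ring.
Qed.

Lemma face_relations_extend y :
  (forall y', V^T *m Lmap C A y' *m V = 0 -> V^T *m Lmap C A y' *m U = 0) ->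
  V^T *m Lmap C A y *m V = 0 ->
  forall z : 'I_m -> R, \sum_i z i *: (V^T *m A i *m V) = 0 ->
    \sum_i z i *: (V^T *m A i *m U) = 0.
Proof.
move=> closed VLV z Bz.
have conj_shift X : V^T *m Lmap C A (fun i => y i + z i) *m X =
    V^T *m Lmap C A y *m X - \sum_i z i *: (V^T *m A i *m X).
  rewrite Lmap_add mulmxBr mulmxBl mulmx_sumr mulmx_suml; congr (_ - _).
  by apply: eq_bigr => i _; rewrite -scalemxAr -scalemxAl.
have /closed : V^T *m Lmap C A (fun i => y i + z i) *m V = 0.
  by rewrite conj_shift VLV Bz subrr.
by rewrite conj_shift closed // sub0r => /eqP; rewrite oppr_eq0 => /eqP.
Qed.

End FacialReduction.

Theorem mainTheorem12 (R : realType) (d k m : nat)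
  (C : 'M[R]_(d + k)) (A : 'I_m -> 'M[R]_(d + k)) (b : 'I_m -> R)
  (U : 'M[R]_(d + k, d)) (V : 'M[R]_(d + k, k)) :
  symmx C -> (forall i, symmx (A i)) ->
  row_mx U V \in unitmx ->
  U^T *m V = 0 ->
  (exists W Z Rm, RD_optimal C A b U V W Z Rm) ->
  (forall y : 'I_m -> R,
     V^T *m Lmap C A y *m V = 0 <->
     (V^T *m Lmap C A y *m V = 0 /\ V^T *m Lmap C A y *m U = 0)) ->
  exists (W : 'M[R]_d) (Rm : 'M[R]_k), RD_optimal C A b U V W 0 Rm.
Proof.
move=> symC symA _ _ [W [Z [Rm optX]]] closed_iff.
have closed y : V^T *m Lmap C A y *m V = 0 -> V^T *m Lmap C A y *m U = 0.
  by move=> /(closed_iff y).1 [].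
have [y VLV] := RD_optimal_face_dual symC symA optX.
have [Rm' feas'] :=
  RD_feasible_drop_Z symA (face_relations_extend closed VLV) optX.1.
have VLU := closed y VLV.
exists W, Rm'; split=> // W2 Z2 R2 feas2.
rewrite (RD_objective_on_face symC symA VLV VLU feas').
rewrite -(RD_objective_on_face symC symA VLV VLU optX.1).
exact: optX.2 _ _ _ feas2.
Qed.
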